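(* Let $m,n$ be finite integers with $m\geq 2$ and $n\geq 2$. Then $\gamma_{gr}^{2}(P_m\Box P_n)=mn-1$.
   Context: $P_m$ is the path on $m$ vertices and $G\Box H$ is the Cartesian product: vertex set $V(G)\times V(H)$, with $(u,v)\sim(x,y)$ iff ($u=x$ and $vy\in E(H)$) or ($v=y$ and $ux\in E(G)$). For a vertex $v$, $N(v)$ is its open neighborhood and $N[v]=N(v)\cup\{v\}$. A sequence $S=(v_1,\ldots,v_r)$ of distinct vertices is a $2$-sequence if for each $i$ there is $u_i\in N[v_i]$ such that the number of indices $j<i$ with $u_i\in N[v_j]$ is less than $2$. $\gamma_{gr}^{2}(G)$ is the maximum length of a $2$-sequence of $G$. *)

From mathcomp Require Import all_boot all_order.
Set Implicit Arguments. Unset Strict Implicit. Unset Printing Implicit Defensive.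

(* A simple graph on a finite vertex type: adjacency relation [adj]
   (symmetric and irreflexive for the graphs we use). *)

Definition in_cnbhd (T : finType) (adj : rel T) (v u : T) : bool :=
  (u == v) || adj v u.

Definition is_kseq (T : finType) (adj : rel T) (k : nat) (s : seq T) : bool :=
  uniq s &&
  [forall i : 'I_(size s),
     [exists u : T,
        in_cnbhd adj (nth u s i) u &&
        (count (fun w => in_cnbhd adj w u) (take i s) < k)]].

(* gamma_gr^k(G): maximum length of a k-sequence (lengths are bounded by #|T|
   because the vertices are distinct). *)
Definition gamma_gr (T : finType) (adj : rel T) (k : nat) : nat :=
  \max_(r < #|T|.+1 | [exists t : r.-tuple T, is_kseq adj k t]) r.

Definition path_adj (m : nat) : rel 'I_m :=
  fun i j => (i.+1 == j :> nat) || (j.+1 == i :> nat).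

Definition cart_adj (T1 T2 : finType) (a1 : rel T1) (a2 : rel T2) : rel (T1 * T2) :=
  fun x y => ((x.1 == y.1) && a2 x.2 y.2) || ((x.2 == y.2) && a1 x.1 y.1).

Definition grid_adj (m n : nat) : rel ('I_m * 'I_n) :=
  cart_adj (@path_adj m) (@path_adj n).

From mathcomp Require Import all_boot all_order.
From mathcomp Require Import zify.

Set Implicit Arguments.
Unset Strict Implicit.
Unset Printing Implicit Defensive.

(* If every closed neighbourhood has more than k vertices, no k-sequence can
   use all vertices: when the last vertex v is played, every u in N[v] already
   lies in the closed neighbourhoods of all the other |N[u]| - 1 >= k vertices.
   In the grid P_m [] P_n with m, n >= 2 all closed neighbourhoods have at least
   three vertices, so gamma_gr^2 <= mn - 1.  Conversely, the row-major order
   with the last corner removed is a 2-sequence: a vertex outside the last row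
   is witnessed by the vertex below it, whose closed neighbourhood contains no
   earlier vertex, and a vertex of the last row by its right neighbour, whose
   closed neighbourhood contains one earlier vertex, the one above it. *)

Lemma count_uniq_card (T : finType) (P : pred T) (s : seq T) :
  uniq s -> count P s = #|[predI P & s]|.
Proof.
move=> us; rewrite -size_filter -(card_uniqP (filter_uniq P us)).
by apply: eq_card => x; rewrite mem_filter.
Qed.

Section KSequences.

Variables (T : finType) (adj : rel T) (k : nat).

Lemma size_kseq_leq_pred_card (s : seq T) :
  (forall u, k < #|[pred w | in_cnbhd adj w u]|) ->
  is_kseq adj k s -> size s <= #|T|.-1.
Proof.
move=> big_cnbhd /andP[us /forallP witness].
have := max_card (mem s); rewrite (card_uniqP us).
case/lastP: s us witness => [//|s v] us witness.
rewrite size_rcons leq_eqVlt => /orP[/eqP full | ]; last by case: #|T|.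
have s_v : forall x, (x \in s) = (x != v).
  have cover : #|rcons s v| = #|T| by rewrite (card_uniqP us) size_rcons.
  have /(subset_cardP cover) all_in := subset_predT (mem (rcons s v)).
  move: us; rewrite rcons_uniq => /andP[v_s _] x.
  have := all_in x; rewrite mem_rcons !inE.
  by case: eqP => [->|_] /=; [rewrite (negbTE v_s) | move->].
have last_i : size s < size (rcons s v) by rewrite size_rcons.
have [u /andP[] /=] := existsP (witness (Ordinal last_i)).
rewrite nth_rcons ltnn eqxx -cats1 take_size_cat //.
set P := fun w => in_cnbhd adj w u => Pv.
rewrite count_uniq_card; last by move: us; rewrite rcons_uniq => /andP[].
have -> : #|[predI P & s]| = #|[pred w | in_cnbhd adj w u]|.-1.
  rewrite [in RHS](cardD1 v) inE /= Pv add1n /=.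
  by apply: eq_card => x; rewrite !inE s_v andbC.
by have := big_cnbhd u; lia.
Qed.

Lemma gamma_gr_leq_pred_card :
  (forall u, k < #|[pred w | in_cnbhd adj w u]|) -> gamma_gr adj k <= #|T|.-1.
Proof.
move=> big_cnbhd; apply/bigmax_leqP => r /existsP[t kt].
by rewrite -(size_tuple t); apply: size_kseq_leq_pred_card.
Qed.

Lemma size_kseq_leq_gamma_gr (s : seq T) : is_kseq adj k s -> size s <= gamma_gr adj k.
Proof.
move=> ks; have /andP[us _] := ks.
have size_s : size s < #|T|.+1 by rewrite ltnS -(card_uniqP us) max_card.
apply: (@leq_bigmax_cond _ _ _ (Ordinal size_s)).
by apply/existsP; exists (in_tuple s).
Qed.

Lemma is_kseq_pairwise (r : rel T) (s : seq T) :
  uniq s -> pairwise r s ->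
  {in s, forall v, exists2 u, in_cnbhd adj v u &
     #|[pred w | r w v && in_cnbhd adj w u]| < k} ->
  is_kseq adj k s.
Proof.
move=> us rs witness; apply/andP; split=> //; apply/forallP => -[i lti] /=.
have x0 : T by case: s lti {us rs witness} => [|x].
have [u vu small] := witness _ (mem_nth x0 lti).
apply/existsP; exists u; rewrite (set_nth_default x0) // vu /=.
have split_s : s = take i s ++ nth x0 s i :: drop i.+1 s.
  by rewrite -drop_nth // cat_take_drop.
have before_v : {in take i s, forall w, r w (nth x0 s i)}.
  move: rs; rewrite {1}split_s pairwise_cat => /and3P[/allrelP r_before _ _] w w_i.
  by apply: r_before; rewrite ?inE ?eqxx.
rewrite count_uniq_card ?take_uniq //; apply: leq_ltn_trans small.
apply: subset_leq_card; apply/subsetP => w; rewrite !inE => /andP[Pw w_i].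
by rewrite before_v.
Qed.

End KSequences.

Definition lexrel (S R : eqType) (r1 : rel S) (r2 : rel R) : rel (S * R) :=
  fun x y => r1 x.1 y.1 || (x.1 == y.1) && r2 x.2 y.2.

Lemma pairwise_allpairs_lex (S R : eqType) (r1 : rel S) (r2 : rel R) s t :
  pairwise r1 s -> pairwise r2 t ->
  pairwise (lexrel r1 r2) [seq (x, y) | x <- s, y <- t].
Proof.
move=> + r2t; elim: s => [//|x s IHs]; rewrite pairwise_cons => /andP[x_s r1s].
rewrite allpairs_cons pairwise_cat IHs // andbT pairwise_map; apply/andP; split.
  apply/allrelP => _ _ /mapP[y _ ->] /allpairsP[[x' y'] [/= x's _ ->]].
  by rewrite /lexrel /= (allP x_s).
by apply: sub_pairwise r2t => y y'; rewrite /lexrel /= eqxx orbC => ->.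
Qed.

Lemma pairwise_enum_ord (p : nat) : pairwise (fun i j : 'I_p => i < j) (enum 'I_p).
Proof.
rewrite -(pairwise_map val ltn) val_enum_ord -sorted_pairwise ?iota_ltn_sorted //.
exact: ltn_trans.
Qed.

Definition row_major (m n : nat) : seq ('I_m * 'I_n) :=
  [seq (i, j) | i <- enum 'I_m, j <- enum 'I_n].

Definition row_major_lt (m n : nat) : rel ('I_m * 'I_n) :=
  lexrel (fun i j : 'I_m => i < j) (fun i j : 'I_n => i < j).

Section Grid.

Variables m n : nat.

Lemma row_major_uniq : uniq (row_major m n).
Proof. by apply: allpairs_uniq; rewrite ?enum_uniq // => -[? ?] [? ?]. Qed.

Lemma mem_row_major x : x \in row_major m n.
Proof. by case: x => i j; apply/allpairsP; exists (i, j); rewrite !mem_enum. Qed.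

Lemma size_row_major : size (row_major m n) = m * n.
Proof. by rewrite size_allpairs !size_enum_ord. Qed.

Lemma pairwise_row_major : pairwise (@row_major_lt m n) (row_major m n).
Proof. exact: pairwise_allpairs_lex (pairwise_enum_ord m) (pairwise_enum_ord n). Qed.

Lemma grid_cnbhdE (x y : 'I_m * 'I_n) :
  in_cnbhd (@grid_adj m n) x y =
    ((x.1 - y.1) + (y.1 - x.1) + (x.2 - y.2) + (y.2 - x.2) <= 1).
Proof.
case: x y => [a b] [c d]; rewrite /in_cnbhd /grid_adj /cart_adj /path_adj /=.
by rewrite xpair_eqE -!val_eqE /=; apply/idP/idP => H; lia.
Qed.

End Grid.

Lemma path_adj_irr (m : nat) : irreflexive (@path_adj m).
Proof. by move=> i; rewrite /path_adj; lia. Qed.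

Lemma path_adj_nbr (m : nat) : 1 < m -> forall i : 'I_m, exists j, path_adj j i.
Proof.
move=> m_gt1 i; have i_lt := ltn_ord i; case: (ltnP i.+1 m) => [up | down].
  by exists (Ordinal up); rewrite /path_adj /=; lia.
have down_lt : i.-1 < m by lia.
by exists (Ordinal down_lt); rewrite /path_adj /=; lia.
Qed.

Lemma cart_cnbhd_card_gt2 (T1 T2 : finType) (a1 : rel T1) (a2 : rel T2) :
  irreflexive a1 -> irreflexive a2 ->
  (forall x, exists y, a1 y x) -> (forall x, exists y, a2 y x) ->
  forall u, 2 < #|[pred w | in_cnbhd (cart_adj a1 a2) w u]|.
Proof.
move=> irr1 irr2 nbr1 nbr2 [x1 x2].
have [y1 a1y] := nbr1 x1; have [y2 a2y] := nbr2 x2.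
have y1x : y1 != x1 by apply: contraTneq a1y => ->; rewrite irr1.
have y2x : y2 != x2 by apply: contraTneq a2y => ->; rewrite irr2.
apply/card_gt2P; exists (x1, x2), (y1, x2), (x1, y2).
rewrite !inE /in_cnbhd /cart_adj /= !xpair_eqE !eqxx a1y a2y !orbT /=.
by rewrite (eq_sym x1) (negbTE y1x) (negbTE y2x).
Qed.

Lemma grid_kseq (m n : nat) :
  is_kseq (@grid_adj m.+1 n.+1) 2 (rem (ord_max, ord_max) (row_major m.+1 n.+1)).
Proof.
apply: (is_kseq_pairwise (r := @row_major_lt m.+1 n.+1)).
- exact/rem_uniq/row_major_uniq.
- exact: subseq_pairwise (rem_subseq _ _) (pairwise_row_major _ _).
move=> [a b]; rewrite mem_rem_uniq ?row_major_uniq // inE mem_row_major andbT.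
rewrite xpair_eqE -!val_eqE /= => not_corner.
have le1_of_eq (A : {pred 'I_m.+1 * 'I_n.+1}) :
    {in A &, forall w w', w = w'} -> #|A| < 2.
  by move=> A_eq; apply/card_le1_eqP => w w' wA w'A; apply: A_eq.
case: (ltnP a m) => [a_lt | a_ge].
  exists (Ordinal (a_lt : a.+1 < m.+1), b); first by rewrite grid_cnbhdE /=; lia.
  apply: le1_of_eq => -[c d] [c' d']; rewrite !inE /row_major_lt /lexrel /= -!val_eqE /=.
  by rewrite !grid_cnbhdE /=; lia.
have b_lt : b.+1 < n.+1 by have := ltn_ord a; have := ltn_ord b; lia.
exists (a, Ordinal b_lt); first by rewrite grid_cnbhdE /=; lia.
apply: le1_of_eq => -[c d] [c' d']; rewrite !inE /row_major_lt /lexrel /= -!val_eqE /=.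
rewrite !grid_cnbhdE /= => cnb cnb'; apply/eqP; rewrite xpair_eqE -!val_eqE /=.
by lia.
Qed.

Theorem mainTheorem13 (m n : nat) (hm : 2 <= m) (hn : 2 <= n) :
  gamma_gr (@grid_adj m n) 2 = m * n - 1.
Proof.
apply/eqP; rewrite eqn_leq subn1; apply/andP; split.
  have -> : m * n = #|{: 'I_m * 'I_n}| by rewrite card_prod !card_ord.
  apply/gamma_gr_leq_pred_card/cart_cnbhd_card_gt2;
    [exact: path_adj_irr | exact: path_adj_irr | exact: path_adj_nbr hm | exact: path_adj_nbr hn].
case: m hm => // m _; case: n hn => // n _.
rewrite -size_row_major -(size_rem (mem_row_major (ord_max, ord_max))).
exact/size_kseq_leq_gamma_gr/grid_kseq.
Qed.
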